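(* Let $I\subset F$ be a two-sided ideal generated by a finite set of monomials $\{v_k\}\subset W$, let $d=\max_k\deg v_k$, and $A=F/I$. Let $w\in W\setminus I$, $\Delta=\deg w$, and $\varphi:A[-\Delta]\to A$ the graded right $A$-module homomorphism $1\mapsto w+I$. Then $K=\mathrm{Ker}\,\varphi$ is a finitely generated monomial right ideal (generated by cosets of monomials), and every element of a minimal monomial basis of $K$ has degree (in the grading of $A[-\Delta]$) at most $\Delta+d-1$.
   Context: $\mathbb K$ is a field, $F=\mathbb K\langle x_1,\dots,x_n\rangle$ the free associative algebra with standard grading, $W$ its set of monomials (words). $A[-\Delta]$ denotes $A$ with grading $A[-\Delta]_e=A_{e-\Delta}$, so an element $f$ of $A$ homogeneous of degree $e$ has degree $\Delta+e$ in $A[-\Delta]$. *)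

From HB Require Import structures.
From mathcomp Require Import all_boot all_order all_algebra.
Set Implicit Arguments. Unset Strict Implicit. Unset Printing Implicit Defensive.
Import GRing.Theory.
Local Open Scope ring_scope.

(* Words (monomials) in the letters x_1..x_n, represented as 'I_n. *)
Definition word (n : nat) := seq 'I_n.

(* An element of the free algebra F = K<x_1..x_n> is given by a finite formal
   linear combination of words; two such expressions denote the same element
   iff their coefficient functions agree. *)
Definition fpoly (R : fieldType) (n : nat) := seq (R * word n).

Definition coef (R : fieldType) n (p : fpoly R n) (u : word n) : R :=
  \sum_(x <- p | x.2 == u) x.1.

Definition feq (R : fieldType) n (p q : fpoly R n) : Prop :=
  forall u, coef p u = coef q u.

Definition fmono (R : fieldType) n (u : word n) : fpoly R n := [:: (1, u)].

Definition fadd (R : fieldType) n (p q : fpoly R n) : fpoly R n := p ++ q.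
Definition fopp (R : fieldType) n (p : fpoly R n) : fpoly R n :=
  [seq (- x.1, x.2) | x <- p].
Definition fmul (R : fieldType) n (p q : fpoly R n) : fpoly R n :=
  [seq (x.1 * y.1, x.2 ++ y.2) | x <- p, y <- q].

(* f lies in the two-sided ideal I of F generated by the monomials in V:
   f is a finite sum of terms c * a v b with v in V, a b words. *)
Definition inI (R : fieldType) n (V : seq (word n)) (f : fpoly R n) : Prop :=
  exists t : seq (R * word n * word n * word n),
    (forall x, x \in t -> x.1.2 \in V) /\
    feq f [seq (x.1.1.1, x.1.1.2 ++ x.1.2 ++ x.2) | x <- t].

(* Kernel of phi : A[-Delta] -> A, a |-> (w + I) a, described as the
   preimage in F (f + I lies in K iff w f lies in I). *)
Definition inKer (R : fieldType) n (V : seq (word n)) (w : word n)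
  (f : fpoly R n) : Prop :=
  inI V (fmul (fmono R w) f).

(* f + I lies in the right ideal of A = F/I generated by the cosets of the
   monomials in S: f = sum c * s b  (mod I) with s in S. *)
Definition inRgen (R : fieldType) n (V S : seq (word n)) (f : fpoly R n) : Prop :=
  exists t : seq (R * word n * word n),
    (forall x, x \in t -> x.1.2 \in S) /\
    inI V (fadd f (fopp [seq (x.1.1, x.1.2 ++ x.2) | x <- t])).

Definition generatesKer (R : fieldType) n (V : seq (word n)) (w : word n)
  (S : seq (word n)) : Prop :=
  forall f : fpoly R n, inKer V w f <-> inRgen V S f.

Definition minimalMonomialBasis (R : fieldType) n (V : seq (word n)) (w : word n)
  (S : seq (word n)) : Prop :=
  generatesKer R V w S /\
  forall s, s \in S -> ~ generatesKer R V w [seq y <- S | y != s].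

From mathcomp Require Import all_boot all_order all_algebra.
From mathcomp Require Import zify.
Set Implicit Arguments.
Unset Strict Implicit.
Import GRing.Theory.
Local Open Scope ring_scope.

(* A word lies in the monomial ideal I iff it has a factor v_k, and an element
   of F lies in I, resp. represents an element of K, iff every word u of its
   support lies in I, resp. has w u in I.  If w u is in I, a factor v_k of w u
   either lies inside u or overlaps w, and then ends within the first
   deg v_k <= d letters of u: so w p is in I for a prefix p of u of length < d.
   Hence the monomials of degree <= d in K generate K, and in any monomial
   generating set a generator u of degree >= d is either in I or a proper right
   multiple of another generator, so it is redundant. *)

Lemma addr_neq_split (M : nmodType) (a b c d : M) : a + b != c + d -> a != c \/ b != d.
Proof.
have [-> | ] := eqVneq a c; last by left.
by have [-> | ] := eqVneq b d; [rewrite eqxx | right].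
Qed.

Section Coefficients.
Variables (R : fieldType) (n : nat).
Implicit Types (p f : fpoly R n) (u y w : word n).

Lemma coef_cons (x : R * word n) p y :
  coef (x :: p) y = (if x.2 == y then x.1 else 0) + coef p y.
Proof. by rewrite /coef big_cons; case: ifP => // _; rewrite add0r. Qed.

Lemma coef_fmono u y : coef (fmono R u) y = if u == y then 1 else 0.
Proof. by rewrite coef_cons /coef big_nil addr0. Qed.

Lemma coef_fadd p f y : coef (fadd p f) y = coef p y + coef f y.
Proof. exact: big_cat. Qed.

Lemma coef_fopp p y : coef (fopp p) y = - coef p y.
Proof. by rewrite /coef big_map sumrN. Qed.

Lemma coef_fmono_mul w f y :
  coef (fmul (fmono R w) f) y = \sum_(x <- f | w ++ x.2 == y) x.1.
Proof.
by rewrite /fmul /fmono /= cats0 /coef big_map; apply: eq_bigr => x _; rewrite mul1r.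
Qed.

Lemma coef_fmono_mul_cat w f u : coef (fmul (fmono R w) f) (w ++ u) = coef f u.
Proof.
rewrite coef_fmono_mul; apply: eq_bigl => x.
by rewrite eqseq_cat // eqxx.
Qed.

Lemma coef_fmono_mul_notprefix w f y :
  ~~ prefix w y -> coef (fmul (fmono R w) f) y = 0.
Proof.
move=> wy; rewrite coef_fmono_mul big1_seq // => x /andP[/eqP xy _].
by rewrite -xy prefix_prefix in wy.
Qed.

Lemma coef_neq0 p y : coef p y != 0 -> y \in unzip2 p.
Proof.
apply: contraNT => yp; rewrite /coef big1_seq // => x /andP[/eqP xy xp].
by rewrite -xy map_f in yp.
Qed.

Definition fnorm p : fpoly R n := [seq (coef p u, u) | u <- undup (unzip2 p)].

Lemma coef_fnorm p : coef (fnorm p) =1 coef p.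
Proof.
move=> y; rewrite {1}/coef big_map /=.
have [yp | yp] := boolP (y \in unzip2 p).
  by rewrite -big_filter filter_pred1_uniq ?undup_uniq ?mem_undup // big_seq1.
rewrite big1_seq; first exact/esym/eqP/(contraNT (@coef_neq0 p y)).
by move=> u /andP[/eqP -> ]; rewrite mem_undup (negbTE yp).
Qed.

(* A linear combination is rebuilt term by term from elements of [T] through
   [enc], up to an error supported on [Q]; the induction avoids choosing the
   realisation of each term. *)
Section Representation.
Variables (T : Type) (enc : T -> R * word n) (P : pred T) (Q : pred (word n)).

Lemma represent_terms p :
  (forall x, x \in p -> x.1 != 0 -> Q x.2 \/ exists2 z, P z & enc z = x) ->
  exists2 t, all P t & forall y, coef p y != coef (map enc t) y -> Q y.
Proof.
elim: p => [|x p IHp] Hp.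
  by exists [::] => // y; rewrite eqxx.
have [t Pt IHt] := IHp (fun z zp => Hp z (mem_behead (s := x :: p) zp)).
have [x0 | xn0] := eqVneq x.1 0.
  by exists t => // y; rewrite coef_cons x0 if_same add0r; apply: IHt.
have [Qx | [z Pz zx]] := Hp x (mem_head x p) xn0.
  exists t => // y; rewrite coef_cons -[X in _ != X]add0r.
  case/addr_neq_split; last exact: IHt.
  by case: (x.2 =P y) => [<- | _]; rewrite ?eqxx.
exists (z :: t); first by rewrite /= Pz.
by move=> y; rewrite /= !coef_cons zx => /addr_neq_split[]; [rewrite eqxx | apply: IHt].
Qed.

Lemma represent_coef f :
  (forall u, coef f u != 0 -> Q u \/ exists2 z, P z & enc z = (coef f u, u)) ->
  exists2 t, all P t & forall y, coef f y != coef (map enc t) y -> Q y.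
Proof.
move=> Hf; have [|t Pt Ht] := represent_terms (p := fnorm f).
  by move=> _ /mapP[u _ ->]; apply: Hf.
by exists t => // y; rewrite -coef_fnorm; apply: Ht.
Qed.

End Representation.

End Coefficients.

Section MonomialIdeal.
Variables (R : fieldType) (n : nat) (V : seq (word n)).
Implicit Types (f g : fpoly R n) (u s y w : word n) (S : seq (word n)).

Definition word_inI u : bool := has (fun v => infix v u) V.

Lemma word_inI_catl a u : word_inI u -> word_inI (a ++ u).
Proof. by case/hasP=> v vV vu; apply/hasP; exists v => //; apply: infix_catl. Qed.

Lemma word_inI_catr u b : word_inI u -> word_inI (u ++ b).
Proof. by case/hasP=> v vV vu; apply/hasP; exists v => //; apply: infix_catr. Qed.

Lemma word_inI_prefix s u : prefix s u -> word_inI s -> word_inI u.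
Proof. by case/prefixP=> b ->; apply: word_inI_catr. Qed.

Lemma inIP f : inI V f <-> forall u, coef f u != 0 -> word_inI u.
Proof.
split=> [[t [tV tf]] u | Hf].
  rewrite tf => /coef_neq0; rewrite /unzip2 -map_comp => /mapP[x xt ->] /=.
  by apply/hasP; exists x.1.2; [apply: tV | apply: infix_infix].
have [|t /allP tV Ht] := represent_coef (f := f) (Q := xpred0)
  (enc := fun x : R * word n * word n * word n => (x.1.1.1, x.1.1.2 ++ x.1.2 ++ x.2))
  (P := fun x => x.1.2 \in V).
  move=> u /Hf /hasP[v vV /infixP[a [b ->]]]; right.
  by exists (coef f (a ++ v ++ b), a, v, b).
by exists t; split=> // y; apply/eqP/negPn/negP => /Ht.
Qed.

Lemma inI_subP f g :
  inI V (fadd f (fopp g)) <-> forall y, coef f y != coef g y -> word_inI y.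
Proof.
rewrite inIP; split=> H y; move: (H y); rewrite coef_fadd coef_fopp subr_eq0 //.
Qed.

Lemma inKerP w f : inKer V w f <-> forall u, coef f u != 0 -> word_inI (w ++ u).
Proof.
rewrite /inKer inIP; split=> H u; first by rewrite -(coef_fmono_mul_cat w); apply: H.
have [/prefixP[{}u ->] | wu] := boolP (prefix w u).
  by rewrite coef_fmono_mul_cat; apply: H.
by rewrite coef_fmono_mul_notprefix // eqxx.
Qed.

Lemma inKer_fmono w u : inKer V w (fmono R u) <-> word_inI (w ++ u).
Proof.
rewrite inKerP; split=> [-> // | Iu y]; first by rewrite coef_fmono eqxx oner_eq0.
by rewrite coef_fmono; case: (u =P y) => [<- | _]; rewrite ?eqxx.
Qed.

Lemma inRgen_fmono S s : s \in S -> inRgen V S (fmono R s).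
Proof.
move=> sS; exists [:: (1, s, [::])]; split=> [x | ]; first by rewrite mem_seq1 => /eqP ->.
by apply/inI_subP => y; rewrite /= cats0 eqxx.
Qed.

Lemma inRgen_inKer w S f :
  {in S, forall s, word_inI (w ++ s)} -> inRgen V S f -> inKer V w f.
Proof.
move=> HS [t [tS /inI_subP Ht]]; apply/inKerP => u fu.
have [fut | /Ht] := eqVneq (coef f u) (coef [seq (x.1.1, x.1.2 ++ x.2) | x <- t] u).
  move: fu; rewrite fut => /coef_neq0; rewrite /unzip2 -map_comp => /mapP[x xt ->].
  by rewrite /= catA; apply/word_inI_catr/HS/tS.
exact: word_inI_catl.
Qed.

Lemma generator_inKer w S s : generatesKer R V w S -> s \in S -> word_inI (w ++ s).
Proof. by move=> G sS; apply/inKer_fmono/G/inRgen_fmono. Qed.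

Lemma inRgen_subst S S' f :
  {in S, forall s, word_inI s \/ exists2 s', s' \in S' & prefix s' s} ->
  inRgen V S f -> inRgen V S' f.
Proof.
move=> HS [t [tS /inI_subP Ht]].
set enc := fun x : R * word n * word n => (x.1.1, x.1.2 ++ x.2).
have [|t' /allP t'S Ht'] := represent_terms (p := map enc t) (enc := enc)
  (P := fun x => x.1.2 \in S') (Q := word_inI).
  move=> _ /mapP[[[c s] b] xt ->] _ /=.
  have [Is | [s' s'S /prefixP[r ->]]] := HS s (tS _ xt).
    by left; apply: word_inI_catr.
  by right; exists (c, s', r ++ b); rewrite // /enc /= catA.
exists t'; split=> //; apply/inI_subP => y fy.
have [ft | /Ht //] := eqVneq (coef f y) (coef (map enc t) y).
by apply: Ht'; rewrite -ft.
Qed.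

Lemma generatesKer_filter w S u : generatesKer R V w S ->
  word_inI u \/ (exists2 s, s \in S & s != u /\ prefix s u) ->
  generatesKer R V w [seq s <- S | s != u].
Proof.
move=> G Hu f; split; last first.
  by apply: inRgen_inKer => s; rewrite mem_filter => /andP[_]; apply: generator_inKer G.
move/G; apply: inRgen_subst => s sS.
have [-> | su] := eqVneq s u; last by right; exists s; rewrite ?mem_filter ?su ?prefix_refl.
case: Hu => [| [s' s'S [s'u s'p]]]; first by left.
by right; exists s'; rewrite ?mem_filter ?s'u.
Qed.

Local Notation d := (\max_(v <- V) size v)%N.

Lemma word_inI_cat_short_prefix w u : word_inI (w ++ u) ->
  word_inI u \/ exists2 k, (k < d)%N & word_inI (w ++ take k u).
Proof.
case/hasP=> v vV /infixP[a [b wu]].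
have [v0 | ] := eqVneq v [::].
  by left; apply/hasP; exists v; rewrite // v0 infix0s.
rewrite -size_eq0 -lt0n => v0.
have vd : (size v <= d)%N := @leq_bigmax_seq _ V xpredT size v vV isT.
have [wa | aw] := leqP (size w) (size a).
  left; apply/hasP; exists v => //.
  have -> : u = drop (size w) (a ++ v ++ b) by rewrite -wu drop_size_cat.
  rewrite drop_cat; case: ifP => [_ | /negbT]; first exact/infix_catl/prefix_infix.
  by rewrite -leqNgt => aw; rewrite (_ : size w - size a = 0)%N ?drop0 ?prefix_infix //; lia.
right; exists (size a + size v - size w)%N; first by lia.
apply/hasP; exists v => //.
have -> : w ++ take (size a + size v - size w) u =
          take (size w + (size a + size v - size w)) (w ++ u).
  by rewrite take_cat ltnNge leq_addr /= addKn.
rewrite wu catA; apply: (infix_prefix_trans (suffix_infix a v)).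
by rewrite take_cat size_cat ifN ?prefix_prefix // -leqNgt -leq_subLR.
Qed.

Fixpoint words_upto k : seq (word n) :=
  if k is k'.+1 then [::] :: [seq i :: s | i <- enum 'I_n, s <- words_upto k']
  else [:: [::]].

Lemma mem_words_upto k s : (size s <= k)%N -> s \in words_upto k.
Proof.
elim: k s => [|k IHk] [|i s] //= sk; rewrite in_cons; apply/orP; right.
by apply: (allpairs_f (fun i s => i :: s)); [rewrite mem_enum | apply: IHk].
Qed.

Definition short_generators w := [seq u <- words_upto d | word_inI (w ++ u)].

Lemma generatesKer_short_generators w : generatesKer R V w (short_generators w).
Proof.
move=> f; split; last by apply: inRgen_inKer => s; rewrite mem_filter => /andP[].
move/inKerP => Hf.
have [|t /allP tS Ht] := represent_coef (f := f) (Q := word_inI)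
  (enc := fun x : R * word n * word n => (x.1.1, x.1.2 ++ x.2))
  (P := fun x => x.1.2 \in short_generators w).
  move=> u /Hf /word_inI_cat_short_prefix[Iu | [k kd Ik]]; first by left.
  right; exists (coef f u, take k u, drop k u); rewrite /= ?cat_take_drop //.
  by rewrite mem_filter Ik mem_words_upto // size_take_min; lia.
by exists t; split=> //; apply/inI_subP.
Qed.

Lemma long_generator_redundant w S u : generatesKer R V w S -> (d <= size u)%N ->
  word_inI (w ++ u) -> word_inI u \/ exists2 s, s \in S & s != u /\ prefix s u.
Proof.
move=> G du /word_inI_cat_short_prefix[Iu | [k kd Ik]]; first by left.
have [Ip | Ip] := boolP (word_inI (take k u)).
  by left; apply: word_inI_prefix Ip; apply: prefix_take.
right; have /G[t [tS /inI_subP Ht]] : inKer V w (fmono R (take k u)).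
  exact/inKer_fmono.
have /coef_neq0 : coef [seq (x.1.1, x.1.2 ++ x.2) | x <- t] (take k u) != 0.
  by apply: contra Ip => /eqP t0; apply: Ht; rewrite t0 coef_fmono eqxx oner_eq0.
rewrite /unzip2 -map_comp => /mapP[x xt /= ukx].
exists x.1.2; first exact: tS.
split; last by apply: (@prefix_trans _ (take k u)); rewrite ?prefix_take // ukx prefix_prefix.
apply/eqP => su; have := leq_trans kd du; rewrite ltnNge => /negP; apply.
by rewrite -su (leq_trans (leq_addr (size x.2) _)) // -size_cat -ukx size_take_min geq_minl.
Qed.

End MonomialIdeal.

Theorem mainTheorem14 (R : fieldType) (n : nat) (V : seq (word n)) (w : word n) :
  ~ inI V (fmono R w) ->
  (exists S : seq (word n), generatesKer R V w S) /\
  (forall S : seq (word n), minimalMonomialBasis R V w S ->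
     forall u, u \in S ->
       (size w + size u <= size w + \max_(v <- V) size v - 1)%N).
Proof.
move=> _; split; first by exists (short_generators V w); apply: generatesKer_short_generators.
move=> S [G minS] u uS.
have [ud | du] := ltnP (size u) (\max_(v <- V) size v)%N; first by lia.
exfalso; apply/(minS u uS)/(generatesKer_filter G).
exact: long_generator_redundant G du (generator_inKer G uS).
Qed.
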